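(* Assume the new-symbol weights are of product form $w^t_i=u(i)\,v(m_t)$. Let $x_{1:n}\in\mathcal X^n$ ($n\ge1$) have used alphabet size $m$ and counts $n_j$. Then the redundancy of the adaptive model $S^{\vec\beta^*}$ satisfies $$R^{\vec\beta^*}_S(x_{1:n}) \le \mathrm{CL}_w(\mathcal A) - (m-1)\ln m + \sum_{j\in\mathcal A}\tfrac12\ln n_j - \tfrac12\ln n + \tfrac32\,m\ln\ln\frac{2n}{m} + 2.33\,m + 0.86 .$$
   Context: Let $\mathcal X$ be a finite base alphabet. For $x_{1:n}\in\mathcal X^n$, let $n_i$ be the number of occurrences of $i$ in $x_{1:n}$, $\mathcal A=\{x_1,\dots,x_n\}$, $m=|\mathcal A|$. For $0\le t\le n$ let $\mathcal A_t=\{x_1,\dots,x_t\}$ ($\mathcal A_0=\emptyset$), $m_t=|\mathcal A_t|$, $n^t_i$ the number of occurrences of $i$ in $x_{1:t}$. Product-form weights: $u:\mathcal X\to(0,\infty)$ and $v:\{0,1,\dots\}\to(0,\infty)$ such that $w^t_i:=u(i)v(m_t)$ satisfies $\sum_{k\in\mathcal X\setminus\mathcal A_t}w^t_k\le1$ for all $t$. Adaptive model: $\beta^*_t:=m_t/\ln\frac{t+1}{m_t}$ for $t\ge1$, and $\beta^*_0\in(0,\infty)$ arbitrary; $S^{\vec\beta^*}(x_{t+1}=i\mid x_{1:t})=n^t_i/(t+\beta^*_t)$ if $n^t_i>0$ and $\beta^*_t w^t_i/(t+\beta^*_t)$ if $n^t_i=0$; $S^{\vec\beta^*}(x_{1:n})=\prod_{t=0}^{n-1}S^{\vec\beta^*}(x_{t+1}\mid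 x_{1:t})$. $\mathrm{CL}_w(\mathcal A):=\sum_{t\in\{0,\dots,n-1\}:\,x_{t+1}\notin\mathcal A_t}\ln(1/w^t_{x_{t+1}})$. Redundancy $R^{\vec\beta^*}_S(x_{1:n}):=\ln\big(n^{-n}\prod_{j\in\mathcal A}n_j^{n_j}\big)-\ln S^{\vec\beta^*}(x_{1:n})$. Natural logarithms. *)

From mathcomp Require Import all_boot.
From Stdlib Require Import Reals.
Set Implicit Arguments. Unset Strict Implicit. Unset Printing Implicit Defensive.
Open Scope R_scope.

Definition sumR (l : seq R) : R := foldr Rplus 0 l.
Definition prodR (l : seq R) : R := foldr Rmult 1 l.

Section Model.
Variable X : finType.

(* prefix_pairs [::] s = [:: (x_{1:0}, x_1); (x_{1:1}, x_2); ...; (x_{1:n-1}, x_n)] *)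
Fixpoint prefix_pairs (pre rest : seq X) : seq (seq X * X) :=
  match rest with
  | [::] => [::]
  | x :: r => (pre, x) :: prefix_pairs (rcons pre x) r
  end.

Definition msize (pre : seq X) : nat := size (undup pre).

Definition cnt (pre : seq X) (i : X) : nat := count_mem i pre.

Definition weight (u : X -> R) (v : nat -> R) (pre : seq X) (i : X) : R :=
  u i * v (msize pre).

Definition beta_star (beta0 : R) (pre : seq X) : R :=
  match size pre with
  | 0%nat => beta0
  | t => INR (msize pre) / ln (INR t.+1 / INR (msize pre))
  end.

Definition S_cond (u : X -> R) (v : nat -> R) (beta0 : R) (pre : seq X) (i : X) : R :=
  let t := INR (size pre) in
  let b := beta_star beta0 pre in
  if leq 1 (cnt pre i) then INR (cnt pre i) / (t + b)
  else b * weight u v pre i / (t + b).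

Definition S_prob (u : X -> R) (v : nat -> R) (beta0 : R) (s : seq X) : R :=
  prodR [seq S_cond u v beta0 p.1 p.2 | p <- prefix_pairs [::] s].

Definition CL (u : X -> R) (v : nat -> R) (s : seq X) : R :=
  sumR [seq ln (/ weight u v p.1 p.2) | p <- prefix_pairs [::] s & p.2 \notin p.1].

Definition redundancy (u : X -> R) (v : nat -> R) (beta0 : R) (s : seq X) : R :=
  ln (prodR [seq INR (cnt s j) ^ (cnt s j) | j <- undup s] / INR (size s) ^ (size s))
  - ln (S_prob u v beta0 s).

End Model.

(* Write n_j for the count of symbol j, m_t for the number of distinct symbols
   among the first t, and b(t, k) = k / ln((t+1)/k).  Multiplying out S along
   the sequence and writing ln c! = c ln c - c + 1/2 ln c + rho(c) (Stirling
   with exact remainder), R(x_{1:n}) - CL_w(A) becomes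
     1/2 sum_j ln n_j - 1/2 ln n + rho(n) - sum_j rho(n_j)
     + sum_{1 <= t < n} ln(1 + b_t/t) + sum_{new symbol at t >= 1} (-ln b_t).
   An exchange inequality shows that the path-dependent second line is largest
   when all m new symbols come first ([path_cost_new]); the extreme path splits
   into a warm-up, bounded by 2 ln m - ln m!, and a tail of n - m normaliser
   steps, bounded by telescoping against ln((2m+2j+1)/(2j+1)) while t < 7m and
   against the increments of 3/2 m ln ln(2t/m) afterwards ([tail_cost_le]).
   With 5/8 <= rho <= 1 the constants 2.33 m + 0.86 follow. *)

From HB Require Import structures.
From mathcomp Require Import all_boot.
From Stdlib Require Import Reals Lra Psatz.
From Coquelicot Require Import Coquelicot.
Open Scope R_scope.
Set Implicit Arguments. Unset Strict Implicit.

Lemma nonneg_of_deriv_nonneg (f f' : R -> R) y :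
  0 <= y -> f 0 = 0 ->
  (forall c, 0 <= c <= y -> derivable_pt_lim f c (f' c)) ->
  (forall c, 0 <= c <= y -> 0 <= f' c) -> 0 <= f y.
Proof.
move=> Hy Hf0 Hd Hpos. case: (Req_dec y 0) => [->|Hy0]; first lra.
have [c [Hc1 Hc2]] := MVT_cor2 f f' 0 y ltac:(lra) Hd.
have := Hpos c ltac:(lra). nra.
Qed.

Lemma ln_le_sub1 x : 0 < x -> ln x <= x - 1.
Proof. move=> Hx. have := exp_ineq1_le (ln x). rewrite exp_ln //. lra. Qed.

Lemma ln_ge_1_sub_inv x : 0 < x -> 1 - / x <= ln x.
Proof.
move=> Hx. have := ln_le_sub1 (Rinv_0_lt_compat x Hx). rewrite ln_Rinv //. lra.
Qed.

Lemma ln_1p_le y : -1 < y -> ln (1 + y) <= y.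
Proof. move=> Hy. have := ln_le_sub1 (x := 1 + y) ltac:(lra). lra. Qed.

Lemma ln_1p_ge_pade y : 0 <= y -> 2 * y / (2 + y) <= ln (1 + y).
Proof.
move=> Hy.
suff : 0 <= ln (1 + y) - 2 * y / (2 + y) by lra.
apply: (@nonneg_of_deriv_nonneg (fun z => ln (1 + z) - 2 * z / (2 + z))
          (fun c => c ^ 2 / ((1 + c) * (2 + c) ^ 2)) y) => //.
- rewrite Rplus_0_r ln_1. field.
- move=> c Hc. apply is_derive_Reals. auto_derive; first lra. field. lra.
- move=> c Hc. apply Rcomplements.Rdiv_le_0_compat; nra.
Qed.

Lemma ln_1p_le_cubic y : 0 <= y -> ln (1 + y) <= y - y ^ 2 / 2 + y ^ 3 / 3.
Proof.
move=> Hy.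
suff : 0 <= y - y ^ 2 / 2 + y ^ 3 / 3 - ln (1 + y) by lra.
apply: (@nonneg_of_deriv_nonneg (fun z => z - z ^ 2 / 2 + z ^ 3 / 3 - ln (1 + z))
          (fun c => c ^ 3 / (1 + c)) y) => //.
- rewrite Rplus_0_r ln_1. field.
- move=> c Hc. apply is_derive_Reals. auto_derive; first lra. field. lra.
- move=> c Hc. apply Rcomplements.Rdiv_le_0_compat; nra.
Qed.

Lemma ln_succ k : 0 < k -> ln (k + 1) = ln k + ln (1 + / k).
Proof.
move=> Hk. have := Rinv_0_lt_compat k Hk => Hi.
rewrite -ln_mult; [congr ln; field|..]; lra.
Qed.

(* ln 2 = sum_{k=8}^{15} ln(1 + 1/k), which makes the Taylor bounds sharp. *)
Lemma ln2_sum : ln 2 = ln (1 + /8) + ln (1 + /9) + ln (1 + /10) + ln (1 + /11)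
  + ln (1 + /12) + ln (1 + /13) + ln (1 + /14) + ln (1 + /15).
Proof.
have -> : 2 = (1 + /8) * (1 + /9) * (1 + /10) * (1 + /11) * (1 + /12)
              * (1 + /13) * (1 + /14) * (1 + /15) by field.
by rewrite !ln_mult; lra.
Qed.

Lemma ln2_lo : 6912 / 10000 <= ln 2.
Proof.
have H k : 0 < k -> 2 / (2 * k + 1) <= ln (1 + / k).
  move=> Hk. have Hi := Rinv_0_lt_compat k Hk.
  have := ln_1p_ge_pade (Rlt_le _ _ Hi).
  by have -> : 2 * / k / (2 + / k) = 2 / (2 * k + 1) by field; lra.
rewrite ln2_sum.
have := H 8 ltac:(lra); have := H 9 ltac:(lra); have := H 10 ltac:(lra);
have := H 11 ltac:(lra); have := H 12 ltac:(lra); have := H 13 ltac:(lra);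
have := H 14 ltac:(lra); have := H 15 ltac:(lra). lra.
Qed.

Lemma ln2_hi : ln 2 <= 6935 / 10000.
Proof.
have H k : 0 < k -> ln (1 + / k) <= / k - / (2 * k ^ 2) + / (3 * k ^ 3).
  move=> Hk. have Hi := Rinv_0_lt_compat k Hk.
  have := ln_1p_le_cubic (Rlt_le _ _ Hi).
  by have -> : / k - (/ k) ^ 2 / 2 + (/ k) ^ 3 / 3
             = / k - / (2 * k ^ 2) + / (3 * k ^ 3) by field; lra.
rewrite ln2_sum.
have := H 8 ltac:(lra); have := H 9 ltac:(lra); have := H 10 ltac:(lra);
have := H 11 ltac:(lra); have := H 12 ltac:(lra); have := H 13 ltac:(lra);
have := H 14 ltac:(lra); have := H 15 ltac:(lra). lra.
Qed.

(* ln 7 = 3 ln 2 - ln(1 + 1/7), squeezed by the bounds on ln(1+y). *)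
Lemma ln7_bounds : 3 * ln 2 - 1 / 7 <= ln 7 <= 3 * ln 2 - 2 / 15.
Proof.
have h8 : ln 8 = 3 * ln 2.
  by rewrite (_ : 8 = 2 ^ 3) ?ln_pow //=; lra.
have e7 := ln_succ (k := 7) ltac:(lra). rewrite (_ : 7 + 1 = 8) in e7; last lra.
have := ln_1p_le (y := / 7) ltac:(lra).
have := ln_1p_ge_pade (y := / 7) ltac:(lra).
rewrite (_ : 2 * / 7 / (2 + / 7) = 2 / 15); [lra | field].
Qed.

(* 2^14 <= 7^5. *)
Lemma ln7_ge_ln2 : 14 * ln 2 <= 5 * ln 7.
Proof.
have -> : 14 * ln 2 = ln (2 ^ 14) by rewrite ln_pow /=; lra.
have -> : 5 * ln 7 = ln (7 ^ 5) by rewrite ln_pow /=; lra.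
apply Rcomplements.ln_le; [apply pow_lt|simpl]; lra.
Qed.

Lemma INR_ge1 c : (1 <= c)%nat -> 1 <= INR c.
Proof. by move=> H; apply: (le_INR 1 c); apply/leP. Qed.

Lemma INR_addn m n : INR (m + n)%nat = INR m + INR n.
Proof. exact: plus_INR. Qed.

Lemma INR_muln m n : INR (m * n)%nat = INR m * INR n.
Proof. exact: mult_INR. Qed.

Fixpoint log_fact (c : nat) : R :=
  match c with 0%nat => 0 | S c' => log_fact c' + ln (INR c) end.

Lemma log_fact_S c : log_fact c.+1 = log_fact c + ln (INR c.+1).
Proof. by []. Qed.

(* The remainder rho(c) in Stirling's formula ln c! = c ln c - c + 1/2 ln c + rho(c);
   it decreases from rho(1) = 1 towards ln(2 pi)/2. *)
Definition stirling_rem (c : nat) : R :=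
  log_fact c - INR c * ln (INR c) + INR c - / 2 * ln (INR c).

Lemma log_fact_stirling c :
  log_fact c = stirling_rem c + INR c * ln (INR c) - INR c + / 2 * ln (INR c).
Proof. rewrite /stirling_rem. ring. Qed.

Lemma stirling_rem_S c : stirling_rem c.+1 = stirling_rem c + ln (INR c.+1)
  - INR c.+1 * ln (INR c.+1) + INR c * ln (INR c) + 1
  - / 2 * ln (INR c.+1) + / 2 * ln (INR c).
Proof. rewrite /stirling_rem log_fact_S. have := S_INR c. lra. Qed.

Lemma stirling_rem1 : stirling_rem 1 = 1.
Proof. rewrite /stirling_rem /= Rplus_0_l ln_1. ring. Qed.

Lemma stirling_rem_step c : (1 <= c)%nat ->
  stirling_rem c.+1 - stirling_rem c = 1 - (INR c + / 2) * ln (1 + / INR c).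
Proof.
move=> Hc. have e := ln_succ (k := INR c) ltac:(have := INR_ge1 Hc; lra).
rewrite /stirling_rem /= -/(INR c.+1) S_INR e. ring.
Qed.

Lemma stirling_step_ge1 c : (1 <= c)%nat -> 1 <= (INR c + / 2) * ln (1 + / INR c).
Proof.
move=> Hc. have H1 := INR_ge1 Hc.
have := ln_1p_ge_pade (y := / INR c) ltac:(have := Rinv_0_lt_compat (INR c); lra).
have -> : 2 * / INR c / (2 + / INR c) = / (INR c + / 2) by field; lra.
move=> h. have hp : 0 < INR c + / 2 by lra.
apply (Rmult_le_reg_l (/ (INR c + / 2))); first exact: Rinv_0_lt_compat.
rewrite -Rmult_assoc Rinv_l; lra.
Qed.

Lemma stirling_step_le c : (1 <= c)%nat ->
  (INR c + / 2) * ln (1 + / INR c) <= 1 + 3 / 16 * (/ (INR c - / 2) - / (INR c + / 2)).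
Proof.
move=> Hc. have H1 := INR_ge1 Hc. move: (INR c) H1 => x H1.
have h := ln_1p_le_cubic (y := / x) ltac:(have := Rinv_0_lt_compat x; lra).
apply: Rle_trans (Rmult_le_compat_l (x + / 2) _ _ ltac:(lra) h) _.
have -> : (x + / 2) * (/ x - (/ x) ^ 2 / 2 + (/ x) ^ 3 / 3) = 1 + (x + 2) / (12 * x ^ 3)
  by field; lra.
have -> : 3 / 16 * (/ (x - / 2) - / (x + / 2)) = 3 / (16 * x ^ 2 - 4)
  by field; repeat split; nra.
apply Rplus_le_compat_l.
have hx3 : 0 < 12 * x ^ 3 by nra.
have hx2 : 0 < 16 * x ^ 2 - 4 by nra.
apply (Rmult_le_reg_r (12 * x ^ 3 * (16 * x ^ 2 - 4))); first nra.
have -> : (x + 2) / (12 * x ^ 3) * (12 * x ^ 3 * (16 * x ^ 2 - 4))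
        = (x + 2) * (16 * x ^ 2 - 4) by field; lra.
have -> : 3 / (16 * x ^ 2 - 4) * (12 * x ^ 3 * (16 * x ^ 2 - 4)) = 36 * x ^ 3
  by field; lra.
have : 0 <= (x - 1) * (x - 1) * (5 * x + 2) by apply Rmult_le_pos; nra.
nra.
Qed.

Lemma stirling_rem_nonincr c k : (1 <= c)%nat -> stirling_rem (c + k) <= stirling_rem c.
Proof.
move=> Hc. elim: k => [|k IH]; first by rewrite addn0; lra.
have Hck : (1 <= c + k)%nat by rewrite (leq_trans Hc) ?leq_addr.
have := stirling_rem_step Hck. have := stirling_step_ge1 Hck.
rewrite addnS. lra.
Qed.

Lemma stirling_rem_le1 c : (1 <= c)%nat -> stirling_rem c <= 1.
Proof.
move=> Hc. rewrite -stirling_rem1 -(subnKC Hc). exact: stirling_rem_nonincr.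
Qed.

(* rho(c) - 3/(16 (c - 1/2)) is nondecreasing: the upper estimate of the steps
   telescopes. *)
Lemma stirling_rem_corrected_nondecr c k : (1 <= c)%nat ->
  stirling_rem c - 3 / 16 * / (INR c - / 2)
  <= stirling_rem (c + k) - 3 / 16 * / (INR (c + k) - / 2).
Proof.
move=> Hc. elim: k => [|k IH]; first by rewrite addn0; lra.
have Hck : (1 <= c + k)%nat by rewrite (leq_trans Hc) ?leq_addr.
have := stirling_rem_step Hck. have := stirling_step_le Hck.
rewrite addnS S_INR (_ : INR (c + k) + 1 - / 2 = INR (c + k) + / 2); lra.
Qed.

Lemma stirling_rem_ge c : (1 <= c)%nat -> 5 / 8 <= stirling_rem c.
Proof.
move=> Hc. have := stirling_rem_corrected_nondecr c.-1 (leqnn 1).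
rewrite add1n prednK // stirling_rem1 /= (_ : / (1 - / 2) = 2); last field.
have H1 := INR_ge1 Hc.
have : 0 <= 3 / 16 * / (INR c - / 2).
  apply Rmult_le_pos; first lra. apply Rlt_le, Rinv_0_lt_compat; lra.
lra.
Qed.

Lemma stirling_rem_double c : (1 <= c)%nat -> stirling_rem c - stirling_rem (c + c) <= 1 / 4.
Proof.
move=> Hc. have := stirling_rem_corrected_nondecr c Hc. rewrite INR_addn.
have H1 := INR_ge1 Hc. move: (INR c) H1 => x H1.
suff : 3 / 16 * / (x - / 2) - 3 / 16 * / (x + x - / 2) <= 1 / 4 by lra.
have -> : 3 / 16 * / (x - / 2) - 3 / 16 * / (x + x - / 2)
          = 3 * x / (4 * (2 * x - 1) * (4 * x - 1)) by field; repeat split; nra.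
apply (Rmult_le_reg_r (4 * (2 * x - 1) * (4 * x - 1))); first nra.
rewrite /Rdiv Rmult_assoc Rinv_l; nra.
Qed.

Lemma ln_ratio_pos T K : 1 <= K -> K < T -> 0 < ln (T / K).
Proof.
move=> HK HT. rewrite -ln_1. apply: ln_increasing; first lra.
apply (Rmult_lt_reg_r K); first lra. rewrite /Rdiv Rmult_assoc Rinv_l; lra.
Qed.

(* The adaptive escape weight b(t, k) = k / ln((t+1)/k) after t symbols of
   which k are distinct, ... *)
Definition beta_opt (t k : nat) : R := INR k / ln (INR t.+1 / INR k).

(* ... the cost ln((t + b)/t) of the enlarged normaliser at step t+1, ... *)
Definition norm_cost (t k : nat) : R := ln (INR t + beta_opt t k) - ln (INR t).

(* ... and the cost -ln b of the escape factor when a new symbol arrives. *)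
Definition escape_cost (t k : nat) : R := - ln (beta_opt t k).

Lemma beta_opt_pos t k : (1 <= k)%nat -> (k <= t)%nat -> 0 < beta_opt t k.
Proof.
move=> Hk Hkt. have HK := INR_ge1 Hk.
have HT : INR k < INR t.+1 by apply lt_INR; apply/ltP.
apply: Rdiv_lt_0_compat; [lra | exact: ln_ratio_pos].
Qed.

(* Normaliser cost at time t = m + d with m known symbols: comparing
   b <= 2m(m+d)/(2d+1) makes the costs telescope (used while t < 7m). *)
Lemma norm_cost_early m d : 1 <= m -> 0 <= d ->
  ln (m + d + m / ln ((m + d + 1) / m)) - ln (m + d)
  <= ln (2 * m + 2 * d + 1) - ln (2 * d + 1).
Proof.
move=> Hm Hd.
have hL := ln_1p_ge_pade (y := (d + 1) / m) ltac:(apply Rcomplements.Rdiv_le_0_compat; lra).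
rewrite (_ : 1 + (d + 1) / m = (m + d + 1) / m) in hL; last by field; lra.
rewrite (_ : 2 * ((d + 1) / m) / (2 + (d + 1) / m) = 2 * (d + 1) / (2 * m + d + 1)) in hL;
  last by field; lra.
move: hL; set L := ln ((m + d + 1) / m) => hL.
have hL0 : 0 < 2 * (d + 1) / (2 * m + d + 1) by apply Rdiv_lt_0_compat; lra.
have hb : m / L <= m * (2 * m + d + 1) / (2 * (d + 1)).
  apply (Rmult_le_reg_r L); first lra.
  have -> : m / L * L = m by field; lra.
  have h1 : m * (2 * m + d + 1) / (2 * (d + 1)) * (2 * (d + 1) / (2 * m + d + 1)) = m
    by field; lra.
  have : 0 <= m * (2 * m + d + 1) / (2 * (d + 1)) by apply Rcomplements.Rdiv_le_0_compat; nra.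
  nra.
have hb2 : m * (2 * m + d + 1) / (2 * (d + 1)) <= (m + d) * (2 * m / (2 * d + 1)).
  apply (Rmult_le_reg_r (2 * (d + 1) * (2 * d + 1))); first nra.
  have -> : m * (2 * m + d + 1) / (2 * (d + 1)) * (2 * (d + 1) * (2 * d + 1))
          = m * (2 * m + d + 1) * (2 * d + 1) by field; lra.
  have -> : (m + d) * (2 * m / (2 * d + 1)) * (2 * (d + 1) * (2 * d + 1))
          = (m + d) * 2 * m * (2 * (d + 1)) by field; lra.
  nra.
have -> : ln (2 * m + 2 * d + 1) - ln (2 * d + 1)
        = ln ((m + d) * (1 + 2 * m / (2 * d + 1))) - ln (m + d).
  have h2 : 0 <= 2 * m / (2 * d + 1) by apply Rcomplements.Rdiv_le_0_compat; lra.
  rewrite ln_mult; [|lra|lra]. rewrite -Rcomplements.ln_div; [|lra|lra].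
  rewrite (_ : (2 * m + 2 * d + 1) / (2 * d + 1) = 1 + 2 * m / (2 * d + 1)); last by field; lra.
  ring.
have : 0 < m / L by apply Rdiv_lt_0_compat; lra.
move=> hbp. apply Rplus_le_compat_r, Rcomplements.ln_le; nra.
Qed.

Lemma loglog_incr_ge s c : 0 < c -> c < 2 * s ->
  2 / ((2 * s + 1) * ln (2 * (s + 1) / c))
  <= ln (ln (2 * (s + 1) / c)) - ln (ln (2 * s / c)).
Proof.
move=> Hc Hs.
have hA : 0 < ln (2 * s / c).
  rewrite -ln_1; apply: ln_increasing; first lra.
  apply (Rmult_lt_reg_r c); first lra. rewrite /Rdiv Rmult_assoc Rinv_l; lra.
have eBA : ln (2 * (s + 1) / c) - ln (2 * s / c) = ln (1 + / s).
  rewrite -Rcomplements.ln_div; [|apply Rdiv_lt_0_compat; lra..].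
  congr ln. field. lra.
have hBA : 2 / (2 * s + 1) <= ln (1 + / s).
  have := ln_1p_ge_pade (y := / s) ltac:(have := Rinv_0_lt_compat s; lra).
  by rewrite (_ : 2 * / s / (2 + / s) = 2 / (2 * s + 1)); last by field; lra.
move: hA eBA; set A := ln (2 * s / c); set B := ln (2 * (s + 1) / c) => hA eBA.
have hB : 0 < B by have := Rdiv_lt_0_compat 2 (2 * s + 1); lra.
have := ln_ge_1_sub_inv (x := B / A) ltac:(apply Rdiv_lt_0_compat; lra).
rewrite Rcomplements.ln_div //.
rewrite (_ : 1 - / (B / A) = (B - A) / B); last by field; lra.
have : 2 / (2 * s + 1) / B <= (B - A) / B.
  apply Rmult_le_compat_r; [apply Rlt_le, Rinv_0_lt_compat|]; lra.
rewrite (_ : 2 / (2 * s + 1) / B = 2 / ((2 * s + 1) * B)); [lra | field; lra].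
Qed.

Lemma norm_cost_late m s : 1 <= m -> 7 * m <= s + 1 -> 6 <= s ->
  ln (s + m / ln ((s + 1) / m)) - ln s <=
  3 / 2 * m * (ln (ln (2 * (s + 1) / m)) - ln (ln (2 * s / m))).
Proof.
move=> Hm Hs Hs6.
have l2 := ln2_lo. have l72 := ln7_ge_ln2.
have hL : ln 7 <= ln ((s + 1) / m).
  apply: Rcomplements.ln_le; first lra.
  apply (Rmult_le_reg_r m); first lra. rewrite /Rdiv Rmult_assoc Rinv_l; lra.
have eB : ln (2 * (s + 1) / m) = ln 2 + ln ((s + 1) / m).
  rewrite -ln_mult; [congr ln; field|..]; try lra.
  apply Rdiv_lt_0_compat; lra.
have hincr := loglog_incr_ge (s := s) (c := m) ltac:(lra) ltac:(lra).
rewrite eB in hincr *.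
move: hL hincr; set L := ln ((s + 1) / m) => hL hincr.
have hbp : 0 < m / L by apply Rdiv_lt_0_compat; lra.
have h1 : ln (s + m / L) - ln s <= m / L / s.
  rewrite -Rcomplements.ln_div; [|lra|lra].
  rewrite (_ : (s + m / L) / s = 1 + m / L / s); last by field; lra.
  apply ln_1p_le. have : 0 < m / L / s by apply Rdiv_lt_0_compat; lra. lra.
suff : m / L / s <= 3 / 2 * m * (2 / ((2 * s + 1) * (ln 2 + L))).
  have : 0 <= 3 / 2 * m by lra. nra.
rewrite (_ : m / L / s = m * / (L * s)); last by field; lra.
rewrite (_ : 3 / 2 * m * (2 / ((2 * s + 1) * (ln 2 + L)))
           = m * (3 / ((2 * s + 1) * (ln 2 + L)))); last by field; lra.
apply Rmult_le_compat_l; first lra.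
have hden : (2 * s + 1) * (ln 2 + L) <= 3 * (L * s).
  have : (s - 1) * (14 / 5 * ln 2) <= (s - 1) * L by apply Rmult_le_compat_l; lra.
  nra.
have hD : 0 < (2 * s + 1) * (ln 2 + L) by apply Rmult_lt_0_compat; lra.
rewrite (_ : 3 / ((2 * s + 1) * (ln 2 + L)) = / ((2 * s + 1) * (ln 2 + L) / 3));
  last by field; lra.
apply Rinv_le_contravar; lra.
Qed.

Lemma ln_above_chord a b x : 0 < a -> a <= x <= b ->
  (b - x) * ln a + (x - a) * ln b <= (b - a) * ln x.
Proof.
move=> Ha [Hax Hxb].
have tangent y : 0 < y -> ln y - ln x <= y / x - 1.
  move=> Hy. rewrite -Rcomplements.ln_div; [|lra|lra].
  apply: ln_le_sub1. apply Rdiv_lt_0_compat; lra.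
have h1 := Rmult_le_compat_l (b - x) _ _ ltac:(lra) (tangent a Ha).
have h2 := Rmult_le_compat_l (x - a) _ _ ltac:(lra) (tangent b ltac:(lra)).
have : (b - x) * (a / x - 1) + (x - a) * (b / x - 1) = 0 by field; lra.
lra.
Qed.

(* The convex function x - ln 2 - 3/2 ln x stays below 0.705 on [ln 2, ln 14],
   since it does at both endpoints. *)
Lemma loglog_gap_le x : ln 2 <= x <= ln 14 -> x - ln 2 - 3 / 2 * ln x <= 705 / 1000.
Proof.
move=> Hx. have la := ln2_lo. have lb := ln2_hi. have l7 := ln7_bounds.
have e14 : ln 14 = ln 2 + ln 7 by rewrite -ln_mult; [congr ln|..]; lra.
have chord := ln_above_chord (a := ln 2) (b := ln 14) ltac:(lra) Hx.
have end_a : - (3 / 2) * ln (ln 2) <= 705 / 1000.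
  have := ln_ge_1_sub_inv (x := ln 2) ltac:(lra).
  have : / ln 2 <= / (6912 / 10000) by apply Rinv_le_contravar; lra.
  rewrite (_ : / (6912 / 10000) = 10000 / 6912); [lra | field].
have end_b : ln 14 - ln 2 - 3 / 2 * ln (ln 14) <= 705 / 1000.
  have := ln_1p_ge_pade (y := ln 14 - 1) ltac:(lra).
  rewrite (_ : 1 + (ln 14 - 1) = ln 14); last ring.
  have : 2 * (16 / 10) / (36 / 10) <= 2 * (ln 14 - 1) / (2 + (ln 14 - 1)).
    apply (Rmult_le_reg_r ((36 / 10) * (2 + (ln 14 - 1)))); first nra.
    rewrite (_ : 2 * (ln 14 - 1) / (2 + (ln 14 - 1)) * (36 / 10 * (2 + (ln 14 - 1)))
               = 2 * (ln 14 - 1) * (36 / 10)); [nra | field; lra].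
  lra.
have hba : 0 < ln 14 - ln 2 by lra.
apply (Rmult_le_reg_l (ln 14 - ln 2)) => //.
have := Rmult_le_compat_l (ln 14 - x) _ _ ltac:(lra) end_a.
have := Rmult_le_compat_l (x - ln 2) _ _ ltac:(lra) end_b.
nra.
Qed.

Lemma ln_le_half m : 1 <= m -> ln m <= m / 2 - 3 / 10.
Proof.
move=> Hm. have := ln_le_sub1 (x := m / 2) ltac:(lra).
rewrite Rcomplements.ln_div; [|lra|lra]. have := ln2_hi. lra.
Qed.

(* The real inequality behind the tail bound while n <= 7m (th = J/m <= 6). *)
Lemma early_tail_budget m th : 1 <= m -> 0 <= th <= 6 ->
  m * (1 + ln (1 + th)) + 1 / 2 <=
  3 / 2 * m * ln (ln (2 + 2 * th)) + 1955 / 1000 * m + 485 / 1000 - / 2 * ln m.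
Proof.
move=> Hm Hth.
have ex : ln (2 + 2 * th) = ln 2 + ln (1 + th) by rewrite -ln_mult; [congr ln|..]; lra.
have hx : ln 2 <= ln (2 + 2 * th) <= ln 14 by split; apply Rcomplements.ln_le; lra.
have := Rmult_le_compat_l m _ _ ltac:(lra) (loglog_gap_le hx).
have := ln_le_half Hm.
rewrite ex. nra.
Qed.

Fixpoint tail_cost (k d : nat) : R :=
  match d with 0%nat => 0 | S d' => tail_cost k d' + norm_cost (k + d') k end.

(* sum_{j < J} ln((2m + 2j + 1)/(2j + 1)), the telescoping majorant of the
   early part of [tail_cost]. *)
Fixpoint odd_ratio_sum (m J : nat) : R :=
  match J with
  | 0%nat => 0
  | S J' => odd_ratio_sum m J' + (ln (2 * INR m + 2 * INR J' + 1) - ln (2 * INR J' + 1))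
  end.

Lemma tail_cost_le_odd_ratio_sum m J : (1 <= m)%nat -> tail_cost m J <= odd_ratio_sum m J.
Proof.
move=> Hm. elim: J => [|J IH] /=; first lra.
apply: Rplus_le_compat => //.
rewrite /norm_cost /beta_opt S_INR !INR_addn.
apply: norm_cost_early; [exact: INR_ge1 | exact: pos_INR].
Qed.

Lemma log_fact_double N : (1 <= N)%nat ->
  log_fact (N + N) - log_fact N = INR N * ln (INR N) - INR N + 2 * INR N * ln 2
    + / 2 * ln 2 + (stirling_rem (N + N) - stirling_rem N).
Proof.
move=> HN. have H1 := INR_ge1 HN.
rewrite !log_fact_stirling INR_addn (_ : INR N + INR N = 2 * INR N); last ring.
rewrite ln_mult; [ring | lra | lra].
Qed.

Lemma odd_ratio_sum_log_fact m J :
  odd_ratio_sum m J =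
    (log_fact ((m + J) + (m + J)) - log_fact (m + J))
    - (log_fact (m + m) - log_fact m) - (log_fact (J + J) - log_fact J).
Proof.
elim: J => [|J IH]; first by rewrite !addn0 /=; ring.
rewrite [LHS]/= IH !addnS !addSn !log_fact_S !S_INR !INR_addn.
have hm := pos_INR m. have hJ := pos_INR J.
rewrite (_ : INR m + INR J + (INR m + INR J) + 1 + 1 = 2 * (INR m + INR J + 1)); last ring.
rewrite (_ : INR J + INR J + 1 + 1 = 2 * (INR J + 1)); last ring.
rewrite !ln_mult; try lra.
rewrite (_ : INR m + INR J + (INR m + INR J) + 1 = 2 * INR m + 2 * INR J + 1); last ring.
rewrite (_ : INR J + INR J + 1 = 2 * INR J + 1); last ring.
ring.
Qed.

(* From the closed form by Stirling: the remainder terms contribute at most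
   1/4 + 1/4 and J ln(1 + m/J) <= m. *)
Lemma odd_ratio_sum_le m J : (1 <= m)%nat ->
  odd_ratio_sum m J <= INR m * (1 + ln (1 + INR J / INR m)) + 1 / 2.
Proof.
move=> Hm. have HM := INR_ge1 Hm.
case: J => [|J]; first by rewrite /= Rdiv_0_l Rplus_0_r ln_1; lra.
move: (J.+1) (ltn0Sn J) => {}J HJ. have HJr := INR_ge1 HJ.
have HmJ : (1 <= m + J)%nat by rewrite (leq_trans Hm) ?leq_addr.
rewrite odd_ratio_sum_log_fact !log_fact_double // INR_addn.
have dmJ := stirling_rem_nonincr (m + J) HmJ.
have dm := stirling_rem_double Hm. have dJ := stirling_rem_double HJ.
have hln2 : 0 <= ln 2 by have := ln2_lo; lra.
move: (INR m) (INR J) HM HJr => M Jr HM HJr.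
have hJ : Jr * (ln (M + Jr) - ln Jr) <= M.
  rewrite -Rcomplements.ln_div; [|lra|lra].
  rewrite (_ : (M + Jr) / Jr = 1 + M / Jr); last by field; lra.
  have := ln_1p_le (y := M / Jr) ltac:(have := Rdiv_lt_0_compat M Jr; lra).
  move/(Rmult_le_compat_l Jr) => /(_ ltac:(lra)).
  by rewrite (_ : Jr * (M / Jr) = M); last by field; lra.
have hM : ln (M + Jr) - ln M = ln (1 + Jr / M).
  rewrite -Rcomplements.ln_div; [|lra|lra]. congr ln. field. lra.
rewrite -hM. nra.
Qed.

(* 3/2 m ln ln(2s/m): the growth rate of the tail costs once s >= 7m. *)
Definition loglog_term (m s : nat) : R := 3 / 2 * INR m * ln (ln (2 * INR s / INR m)).

Definition tail_budget (m J : nat) : R :=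
  loglog_term m (m + J) + 1955 / 1000 * INR m + 485 / 1000 - / 2 * ln (INR m).

Lemma odd_ratio_sum_le_budget m J : (1 <= m)%nat -> (J <= 6 * m)%nat ->
  INR m * (1 + ln (1 + INR J / INR m)) + 1 / 2 <= tail_budget m J.
Proof.
move=> Hm HJ. have HM := INR_ge1 Hm.
have hJ6 : INR J <= 6 * INR m by move/leP/le_INR: HJ; rewrite INR_muln /=; lra.
have hth : 0 <= INR J / INR m <= 6.
  split; first by apply Rcomplements.Rdiv_le_0_compat; [exact: pos_INR | lra].
  apply (Rmult_le_reg_r (INR m)); first lra. rewrite /Rdiv Rmult_assoc Rinv_l; lra.
have := early_tail_budget HM hth.
rewrite /tail_budget /loglog_term INR_addn.
rewrite (_ : 2 * (INR m + INR J) / INR m = 2 + 2 * (INR J / INR m)); [lra | field; lra].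
Qed.

Lemma tail_cost_late m D k : (1 <= m)%nat -> (7 * m <= m + D + 1)%nat ->
  tail_cost m (D + k) <= tail_cost m D + loglog_term m (m + (D + k)) - loglog_term m (m + D).
Proof.
move=> Hm HD. have HM := INR_ge1 Hm.
elim: k => [|k IH]; first by rewrite addn0; lra.
rewrite addnS /=.
have h7 : 7 * INR m <= INR (m + (D + k)) + 1.
  have : (7 * m <= m + (D + k) + 1)%nat.
    by apply: (leq_trans HD); rewrite leq_add2r leq_add2l leq_addr.
  by move/leP/le_INR; rewrite INR_addn INR_muln /=; lra.
have h6 : 6 <= INR (m + (D + k)) by lra.
have := norm_cost_late HM h7 h6.
rewrite /norm_cost /beta_opt /loglog_term addnS !S_INR.
rewrite /loglog_term in IH. lra.
Qed.

Lemma tail_cost_le m J : (1 <= m)%nat -> tail_cost m J <= tail_budget m J.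
Proof.
move=> Hm.
have early J' : (J' <= 6 * m)%nat -> tail_cost m J' <= tail_budget m J'.
  move=> HJ'. apply: Rle_trans (tail_cost_le_odd_ratio_sum J' Hm) _.
  apply: Rle_trans (odd_ratio_sum_le J' Hm) _. exact: odd_ratio_sum_le_budget.
case: (leqP J (6 * m - 1)) => HJ.
  by apply: early; apply: (leq_trans HJ); exact: leq_subr.
have HD : (7 * m <= m + (6 * m - 1) + 1)%nat.
  by rewrite -addnA subnK ?muln_gt0 // -{1}(add1n 6) mulnDl mul1n.
rewrite -(subnKC (ltnW HJ)).
have := tail_cost_late (J - (6 * m - 1)) Hm HD.
have := early (6 * m - 1)%nat (leq_subr 1 (6 * m)).
rewrite /tail_budget. lra.
Qed.

(* Normaliser and escape costs when the first k symbols are all new. *)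
Fixpoint warmup_cost (k : nat) : R :=
  match k with
  | 0%nat => 0
  | S k' => warmup_cost k'
            + match k' with 0%nat => 0 | _ => norm_cost k' k' + escape_cost k' k' end
  end.

(* Cost of the extreme path to time t with k distinct symbols: all new symbols
   first, then t - k repetitions. *)
Definition path_cost (t k : nat) : R := warmup_cost k + tail_cost k (t - k).

(* Exchange inequality, written out in T = t and K = k:
     norm_cost (t+1) k + escape_cost (t+1) k <= escape_cost t k + norm_cost (t+1) (k+1),
   i.e. postponing a new symbol by one step never increases the cost. *)
Lemma escape_exchange T K : 1 <= K -> K <= T ->
  ln (T + 1 + K / ln ((T + 2) / K)) - ln (T + 1) - ln (K / ln ((T + 2) / K)) <=
  ln (T + 1 + (K + 1) / ln ((T + 2) / (K + 1))) - ln (T + 1) - ln (K / ln ((T + 1) / K)).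
Proof.
move=> HK HT.
have hL := ln_ratio_pos (T := T + 1) HK ltac:(lra).
have hL' := ln_ratio_pos (T := T + 2) HK ltac:(lra).
have hL'' := ln_ratio_pos (T := T + 2) (K := K + 1) ltac:(lra) ltac:(lra).
have hLL'' : ln ((T + 2) / (K + 1)) <= ln ((T + 1) / K).
  apply Rcomplements.ln_le; first by apply Rdiv_lt_0_compat; lra.
  apply (Rmult_le_reg_r (K * (K + 1))); first nra.
  rewrite (_ : (T + 2) / (K + 1) * (K * (K + 1)) = (T + 2) * K); last by field; lra.
  rewrite (_ : (T + 1) / K * (K * (K + 1)) = (T + 1) * (K + 1)); [nra | field; lra].
have hL'L : (T + 1) * (ln ((T + 2) / K) - ln ((T + 1) / K)) <= 1.
  rewrite -Rcomplements.ln_div; [|apply Rdiv_lt_0_compat; lra..].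
  rewrite (_ : (T + 2) / K / ((T + 1) / K) = 1 + / (T + 1)); last by field; lra.
  have := ln_1p_le (y := / (T + 1)) ltac:(have := Rinv_0_lt_compat (T + 1); lra).
  move/(Rmult_le_compat_l (T + 1)) => /(_ ltac:(lra)).
  by rewrite Rinv_r; lra.
move: hL hL' hL'' hLL'' hL'L.
set L := ln ((T + 1) / K); set L' := ln ((T + 2) / K); set L'' := ln ((T + 2) / (K + 1)).
move=> hL hL' hL'' hLL'' hL'L.
have hl : 0 < T + 1 + (K + 1) / L'' by have := Rdiv_lt_0_compat (K + 1) L''; lra.
have -> : ln (T + 1 + K / L') - ln (T + 1) - ln (K / L') =
          ln (((T + 1) * L' + K) / K) - ln (T + 1).
  rewrite (Rcomplements.ln_div K L'); [|lra|lra].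
  rewrite (Rcomplements.ln_div _ K); [|nra|lra].
  rewrite (_ : T + 1 + K / L' = ((T + 1) * L' + K) / L'); last by field; lra.
  rewrite Rcomplements.ln_div; [ring|nra|lra].
have -> : ln (T + 1 + (K + 1) / L'') - ln (T + 1) - ln (K / L) =
          ln ((T + 1 + (K + 1) / L'') * L / K) - ln (T + 1).
  rewrite (Rcomplements.ln_div K L); [|lra|lra].
  rewrite (Rcomplements.ln_div _ K); [|nra|lra].
  rewrite ln_mult; [ring|lra|lra].
apply Rplus_le_compat_r, Rcomplements.ln_le; first by apply Rdiv_lt_0_compat; nra.
apply Rmult_le_compat_r; first by apply Rlt_le, Rinv_0_lt_compat; lra.
have : K + 1 <= (K + 1) / L'' * L.
  apply (Rmult_le_reg_r L''); first lra.
  rewrite (_ : (K + 1) / L'' * L * L'' = (K + 1) * L); [nra | field; lra].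
nra.
Qed.

Lemma path_cost_repeat t k : (1 <= k)%nat -> (k <= t)%nat ->
  path_cost t.+1 k = path_cost t k + norm_cost t k.
Proof. move=> Hk Hkt. rewrite /path_cost subSn //= subnKC //. ring. Qed.

Lemma warmup_cost_S k : (1 <= k)%nat ->
  warmup_cost k.+1 = warmup_cost k + norm_cost k k + escape_cost k k.
Proof. by case: k => [//|k] _ /=; ring. Qed.

(* A new symbol at step t+1 costs at most what the extreme path pays: by the
   exchange inequality the escape can be moved back to the warm-up phase. *)
Lemma path_cost_new t k : (1 <= k)%nat -> (k <= t)%nat ->
  path_cost t k + norm_cost t k + escape_cost t k <= path_cost t.+1 k.+1.
Proof.
move=> Hk Hkt. rewrite /path_cost subSS warmup_cost_S //.
rewrite -(subnKC Hkt) addKn. elim: (t - k)%nat => [|d IH]; first by rewrite addn0 /=; lra.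
have HK := INR_ge1 Hk.
have HT : INR k <= INR (k + d) by apply le_INR; apply/leP; exact: leq_addr.
have := escape_exchange HK HT.
rewrite /= /norm_cost /escape_cost /beta_opt !addnS !addSn !S_INR !INR_addn.
rewrite !INR_addn in HT IH. move: IH.
rewrite /norm_cost /escape_cost /beta_opt !S_INR !INR_addn.
rewrite (_ : INR k + INR d + 1 + 1 = INR k + INR d + 2); last ring.
lra.
Qed.

(* During the warm-up each step costs ln(1 + L) - ln k <= ln(k+1) - 2 ln k,
   where L = ln((k+1)/k). *)
Lemma warmup_cost_le k : (1 <= k)%nat -> warmup_cost k <= 2 * ln (INR k) - log_fact k.
Proof.
elim: k => [//|k IH] _. case: k IH => [|k] IH; first by rewrite /= Rplus_0_l ln_1; lra.
rewrite warmup_cost_S // log_fact_S.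
have {}IH := IH erefl. have HK := INR_ge1 (ltn0Sn k).
move: IH; rewrite /norm_cost /escape_cost /beta_opt (S_INR k.+1); move: (INR k.+1) HK => K HK IH.
have hL := ln_ratio_pos (T := K + 1) HK ltac:(lra).
have eL : ln ((K + 1) / K) = ln (K + 1) - ln K by rewrite Rcomplements.ln_div; lra.
move: hL eL; set L := ln ((K + 1) / K) => hL eL.
have step : ln (K + K / L) - ln K + - ln (K / L) = ln (1 + L) - ln K.
  rewrite (Rcomplements.ln_div K L); [|lra|lra].
  rewrite (_ : K + K / L = K * (1 + L) / L); last by field; lra.
  rewrite Rcomplements.ln_div; [|nra|lra]. rewrite ln_mult; [ring|lra|lra].
have := ln_1p_le (y := L) ltac:(lra).
lra.
Qed.

(* (R, +, 0) as a commutative monoid, so that [perm_big] applies to [sumR]. *)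
HB.instance Definition _ := Monoid.isComLaw.Build R 0 Rplus
  (fun a b c => esym (Rplus_assoc a b c)) Rplus_comm Rplus_0_l.

Lemma sumR_big (T : Type) (f : T -> R) (l : seq T) :
  sumR (map f l) = \big[Rplus/0]_(i <- l) f i.
Proof. by elim: l => [|a l IH] /=; rewrite ?big_nil // big_cons IH. Qed.

Lemma sumR_perm (T : eqType) (f : T -> R) (l1 l2 : seq T) :
  perm_eq l1 l2 -> sumR (map f l1) = sumR (map f l2).
Proof. by move=> H; rewrite !sumR_big; apply: perm_big. Qed.

Lemma sumR_rcons l a : sumR (rcons l a) = sumR l + a.
Proof. by elim: l => [|b l IH] /=; rewrite ?IH; ring. Qed.

Lemma prodR_rcons l a : prodR (rcons l a) = prodR l * a.
Proof. by elim: l => [|b l IH] /=; rewrite ?IH; ring. Qed.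

Lemma sumR_update (T : eqType) (l : seq T) (f g : T -> R) x :
  uniq l -> x \in l -> (forall j, j != x -> g j = f j) ->
  sumR (map g l) = sumR (map f l) + (g x - f x).
Proof.
elim: l => [//|a l IH] /= /andP[anl ul]. rewrite in_cons => /orP[/eqP ->|xl] H.
  have -> : sumR (map g l) = sumR (map f l).
    congr sumR; apply/eq_in_map => j jl; apply: H.
    by apply: contraNneq anl => <-.
  ring.
have ax : a != x by apply: contraNneq anl => ->.
rewrite (IH ul xl H) (H a ax). ring.
Qed.

Lemma sumR_ge (T : eqType) (l : seq T) (f : T -> R) c :
  (forall j, j \in l -> c <= f j) -> INR (size l) * c <= sumR (map f l).
Proof.
elim: l => [|a l IH] H; first by rewrite /=; lra.
rewrite [size _]/= S_INR (_ : sumR _ = f a + sumR (map f l)) //. have := H a (mem_head _ _).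
have := IH (fun j jl => H j (ltac:(by rewrite in_cons jl orbT))). lra.
Qed.

Lemma ln_prodR (T : eqType) (l : seq T) (g : T -> R) :
  (forall j, j \in l -> 0 < g j) ->
  ln (prodR (map g l)) = sumR (map (fun j => ln (g j)) l) /\ 0 < prodR (map g l).
Proof.
elim: l => [|a l IH] H /=; first by rewrite ln_1; split; lra.
have Ha : 0 < g a by apply: H; rewrite in_cons eqxx.
have [e p] := IH (fun y yl => H y ltac:(by rewrite in_cons yl orbT)).
by rewrite ln_mult // e; split; [ring | apply Rmult_lt_0_compat].
Qed.

Section Sequences.
Variable X : finType.
Implicit Types (s : seq X) (x j : X).

Lemma prefix_pairs_rcons (pre s : seq X) x :
  prefix_pairs pre (rcons s x) = rcons (prefix_pairs pre s) (pre ++ s, x).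
Proof.
by elim: s pre => [|a s IH] pre /=; rewrite ?cats0 // IH cat_rcons.
Qed.

Lemma cnt_rcons s x j : cnt (rcons s x) j = (cnt s j + (x == j))%nat.
Proof. by rewrite /cnt -cats1 count_cat /= addn0 eq_sym. Qed.

Lemma cnt_gt0 s j : j \in s -> (1 <= cnt s j)%nat.
Proof. by rewrite /cnt -has_count has_pred1. Qed.

Lemma undup_rcons_mem s x : x \in s -> perm_eq (undup (rcons s x)) (undup s).
Proof.
move=> xs. apply: uniq_perm; rewrite ?undup_uniq // => y.
by rewrite !mem_undup mem_rcons in_cons; case: eqP => // ->.
Qed.

Lemma undup_rcons_notin s x : x \notin s -> perm_eq (undup (rcons s x)) (rcons (undup s) x).
Proof.
move=> xs. apply: uniq_perm; rewrite ?rcons_uniq ?mem_undup ?xs ?undup_uniq //.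
by move=> y; rewrite mem_undup !mem_rcons !in_cons mem_undup.
Qed.

Lemma size_undup_rcons s x :
  size (undup (rcons s x)) = (size (undup s) + (x \notin s))%nat.
Proof.
case: (boolP (x \in s)) => xs.
  by rewrite (perm_size (undup_rcons_mem xs)) addn0.
by rewrite (perm_size (undup_rcons_notin xs)) size_rcons addn1.
Qed.

Lemma sumR_undup_rcons (f : nat -> R) s x :
  sumR [seq f (cnt (rcons s x) j) | j <- undup (rcons s x)] =
  sumR [seq f (cnt s j) | j <- undup s] +
  (if x \in s then f (cnt s x).+1 - f (cnt s x) else f 1%nat).
Proof.
case: ifPn => xs.
  rewrite (sumR_perm _ (undup_rcons_mem xs)).
  rewrite (@sumR_update _ _ (fun j => f (cnt s j)) (fun j => f (cnt (rcons s x) j)) x).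
  - by rewrite cnt_rcons eqxx addn1.
  - exact: undup_uniq.
  - by rewrite mem_undup.
  - by move=> j jx; rewrite cnt_rcons eq_sym (negbTE jx) addn0.
rewrite (sumR_perm _ (undup_rcons_notin xs)) map_rcons sumR_rcons.
have -> : cnt (rcons s x) x = 1%nat by rewrite cnt_rcons eqxx /cnt (count_memPn xs).
congr (_ + _); congr sumR; apply/eq_in_map => j; rewrite mem_undup => js.
by rewrite cnt_rcons (_ : (x == j) = false) ?addn0 //; apply: contraNF xs => /eqP ->.
Qed.

End Sequences.

Section Model.
Variable X : finType.
Variables (u : X -> R) (v : nat -> R) (beta0 : R).
Hypothesis hu : forall i, 0 < u i.
Hypothesis hv : forall k, 0 < v k.
Hypothesis hb0 : 0 < beta0.
Implicit Types (s : seq X) (x : X).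

Lemma weight_pos s x : 0 < weight u v s x.
Proof. exact: Rmult_lt_0_compat. Qed.

Lemma msize_ge1 s : (1 <= size s)%nat -> (1 <= msize s)%nat.
Proof.
case: s => [//|a s] _. rewrite /msize lt0n size_eq0.
by apply/eqP => e; have := mem_head a s; rewrite -mem_undup e.
Qed.

Lemma msize_le s : (msize s <= size s)%nat.
Proof. exact: size_undup. Qed.

Lemma beta_star_eq s : (1 <= size s)%nat -> beta_star beta0 s = beta_opt (size s) (msize s).
Proof. by rewrite /beta_star /beta_opt; case: (size s). Qed.

Lemma S_cond_pos s x : 0 < S_cond u v beta0 s x.
Proof.
rewrite /S_cond. have hw := weight_pos s x.
case: (leqP 1 (size s)) => Hs.
  have Hb := beta_opt_pos (msize_ge1 Hs) (msize_le s).
  rewrite beta_star_eq //. have := pos_INR (size s).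
  case: ifP => [/INR_ge1|] hc ht; apply Rdiv_lt_0_compat; try lra.
  exact: Rmult_lt_0_compat.
move: Hs; rewrite ltnS leqn0 size_eq0 => /eqP ->.
rewrite /beta_star /= Rplus_0_l.
by apply Rdiv_lt_0_compat => //; apply Rmult_lt_0_compat => //; apply: weight_pos.
Qed.

Lemma S_prob_rcons s x :
  S_prob u v beta0 (rcons s x) = S_prob u v beta0 s * S_cond u v beta0 s x.
Proof. by rewrite /S_prob prefix_pairs_rcons map_rcons prodR_rcons. Qed.

Lemma S_prob_pos s : 0 < S_prob u v beta0 s.
Proof.
elim/last_ind: s => [|s x IH]; first by rewrite /S_prob /=; lra.
rewrite S_prob_rcons. apply Rmult_lt_0_compat => //. exact: S_cond_pos.
Qed.

Lemma CL_rcons s x :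
  CL u v (rcons s x) = CL u v s + (if x \in s then 0 else ln (/ weight u v s x)).
Proof.
rewrite /CL prefix_pairs_rcons filter_rcons /=.
by case: (boolP (x \in s)) => xs /=; rewrite ?map_rcons ?sumR_rcons ?Rplus_0_r.
Qed.

Definition entropy_term s : R :=
  sumR [seq INR (cnt s j) * ln (INR (cnt s j)) | j <- undup s].

Lemma redundancy_eq s : (1 <= size s)%nat ->
  redundancy u v beta0 s =
  entropy_term s - INR (size s) * ln (INR (size s)) - ln (S_prob u v beta0 s).
Proof.
move=> Hs. have hn := INR_ge1 Hs.
have cnt_pos j : j \in undup s -> 1 <= INR (cnt s j).
  by rewrite mem_undup => /cnt_gt0 /INR_ge1.
have [e p] := @ln_prodR _ (undup s) (fun j => INR (cnt s j) ^ cnt s j)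
  (fun j js => pow_lt (INR (cnt s j)) (cnt s j) ltac:(have := cnt_pos j js; lra)).
rewrite /redundancy Rcomplements.ln_div //; last by apply pow_lt; lra.
rewrite e ln_pow; last lra.
congr (_ - _ - _); congr sumR; apply/eq_in_map => j js.
rewrite ln_pow //. have := cnt_pos j js. lra.
Qed.

Definition excess s : R :=
  entropy_term s - INR (size s) * ln (INR (size s)) - ln (S_prob u v beta0 s) - CL u v s.

Definition excess_bound s : R :=
  sumR [seq / 2 * ln (INR (cnt s j)) | j <- undup s] - / 2 * ln (INR (size s))
  + stirling_rem (size s) - sumR [seq stirling_rem (cnt s j) | j <- undup s]
  + path_cost (size s) (size (undup s)).

(* Appending x: a repeated symbol changes both sides by the same normaliser
   cost; a new symbol adds norm_cost + escape_cost, covered by [path_cost_new]. *)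
Lemma excess_step s x : (1 <= size s)%nat ->
  excess s <= excess_bound s -> excess (rcons s x) <= excess_bound (rcons s x).
Proof.
move=> Hs IH.
have Hb := beta_opt_pos (msize_ge1 Hs) (msize_le s). have hn := INR_ge1 Hs.
rewrite /excess /excess_bound /entropy_term in IH *.
rewrite (sumR_undup_rcons (fun k => INR k * ln (INR k)))
  (sumR_undup_rcons (fun k => / 2 * ln (INR k))) (sumR_undup_rcons stirling_rem).
rewrite size_rcons size_undup_rcons CL_rcons S_prob_rcons.
rewrite ln_mult; [|exact: S_prob_pos|exact: S_cond_pos].
rewrite /S_cond beta_star_eq // (stirling_rem_S (size s)).
move: IH Hb hn (msize_ge1 Hs) (msize_le s); rewrite /msize.
set n := size s; set m := size (undup s); set b := beta_opt n m => IH Hb hn Hm Hmn.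
have hnb : 0 < INR n + b by lra.
case: (boolP (x \in s)) => xs.
- have hc := cnt_gt0 xs. have hcr := INR_ge1 hc.
  rewrite hc addn0 path_cost_repeat // stirling_rem_S /norm_cost -/b.
  rewrite Rcomplements.ln_div; [lra|lra|lra].
- have hc : cnt s x = 0%nat by apply/count_memPn.
  have hw := weight_pos s x.
  have := path_cost_new Hm Hmn. rewrite /norm_cost /escape_cost -/b.
  rewrite hc addn1 stirling_rem1 /= ln_1.
  rewrite Rcomplements.ln_div; [|apply Rmult_lt_0_compat; lra|lra].
  rewrite ln_mult; [|lra|lra]. rewrite ln_Rinv //.
  lra.
Qed.

(* For a single symbol both sides vanish: S(x_1) = w_{x_1}. *)
Lemma excess_single x : excess [:: x] <= excess_bound [:: x].
Proof.
have hw := weight_pos [::] x.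
have hS : S_prob u v beta0 [:: x] = weight u v [::] x.
  rewrite /S_prob /= /S_cond /beta_star /=. field. lra.
rewrite /excess /excess_bound /entropy_term hS /CL /= ln_1 ln_Rinv //.
rewrite /path_cost /= eqxx addn0 /= ln_1. lra.
Qed.

Lemma excess_le s : (1 <= size s)%nat -> excess s <= excess_bound s.
Proof.
elim/last_ind: s => [//|s x IH] _.
case: (leqP 1 (size s)) => Hs; first exact: excess_step (IH Hs).
by move: Hs; rewrite ltnS leqn0 size_eq0 => /eqP ->; apply: excess_single.
Qed.

End Model.

Lemma path_cost_le n m : (1 <= m)%nat -> (m <= n)%nat ->
  path_cost n m <=
  - (INR m - 1) * ln (INR m) + loglog_term m n + 2955 / 1000 * INR m - 14 / 100.
Proof.
move=> Hm Hmn. rewrite /path_cost.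
have := tail_cost_le (n - m) Hm. rewrite /tail_budget subnKC //.
have := warmup_cost_le Hm. rewrite log_fact_stirling.
have := stirling_rem_ge Hm.
lra.
Qed.

(* The bound holds for any positive product weights. *)
Theorem theorem5 (X : finType) (u : X -> R) (v : nat -> R) (beta0 : R)
  (s : seq X)
  (hu : forall i, 0 < u i) (hv : forall k, 0 < v k) (hb0 : 0 < beta0)
  (hw : forall t : nat, leq t (size s) ->
     sumR [seq weight u v (take t s) k | k <- enum X & k \notin take t s] <= 1)
  (hn : leq 1 (size s)) :
  let n := size s in
  let m := size (undup s) in
  redundancy u v beta0 s <=
    CL u v s - (INR m - 1) * ln (INR m)
    + sumR [seq / 2 * ln (INR (cnt s j)) | j <- undup s]
    - / 2 * ln (INR n)
    + 3 / 2 * INR m * ln (ln (2 * INR n / INR m))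
    + 233 / 100 * INR m + 86 / 100.
Proof.
move=> n m.
have := excess_le hu hv hb0 hn.
rewrite /excess -(redundancy_eq u v beta0 hn) /excess_bound.
have := stirling_rem_le1 hn.
have : INR m * (5 / 8) <= sumR [seq stirling_rem (cnt s j) | j <- undup s].
  by apply: sumR_ge => j; rewrite mem_undup => /cnt_gt0; apply: stirling_rem_ge.
have := path_cost_le (msize_ge1 hn) (msize_le s).
rewrite /loglog_term /msize -/n -/m.
lra.
Qed.
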